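(* Let $n\ge 3$. The reciprocal status Hosoya polynomial of the power graph $P(G(n))$ of the gyrogroup $G(n)$ (defined in the context) is $$H_{rs}(P(G(n)),x)=(2^{n-1}-1)x^{\frac{2^{n+2}-2^{n-1}-4}{2}}+2^{n-1}x^{2^n+2^{n-1}-1}+\binom{2^{n-1}-1}{2}x^{2^n+2^{n-1}-2}.$$
   Context: Let $n\ge 3$ be an integer and $m=2^{n-1}$. Let $P(n)=\{0,1,\dots,m-1\}$, $H(n)=\{m,m+1,\dots,2^n-1\}$ and $G(n)=P(n)\cup H(n)$. For $i,j\in G(n)$ let $t,s,k\in P(n)$ be the residues modulo $m$ (taken in $\{0,\dots,m-1\}$) of $i+j$, $i+(\frac m2-1)j$ and $(\frac m2+1)i+(\frac m2-1)j$, respectively, and define $i\oplus j=t$ if $i,j\in P(n)$; $i\oplus j=t+m$ if $i\in P(n),j\in H(n)$; $i\oplus j=s+m$ if $i\in H(n),j\in P(n)$; $i\oplus j=k$ if $i,j\in H(n)$. Then $(G(n),\oplus)$ is a gyrogroup with identity $e=0$. Powers are defined by $a^1=a$, $a^{k+1}=a^k\oplus a$. The power graph $P(G(n))$ is the simple undirected graph with vertex set $G(n)$ in which distinct vertices $u,v$ are adjacent if and only if $u^k=v$ or $v^k=u$ for some positive integer $k$. For a connected graph $G$ with distance $d$, the reciprocal status of a vertex $v$ is $rs(v)=\sum_{u\in V(G),u\ne v}\frac{1}{d(u,v)}$, and the reciprocal status Hosoya polynomial is $H_{rs}(G,x)=\sum_{uv\in E(G)}x^{rs(u)+rs(v)}$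 (sum over edges). *)

From HB Require Import structures.
From mathcomp Require Import all_boot all_order all_algebra.
From mathcomp Require Import boolp.
Set Implicit Arguments.
Unset Strict Implicit.
Unset Printing Implicit Defensive.
Import GRing.Theory Num.Theory.

Definition hm (n : nat) : nat := 2 ^ n.-1.

(* The gyrogroup operation on G(n) = {0,...,2^n - 1} (as naturals).
   P(n) = {i | i < m}, H(n) = {i | m <= i < 2^n}. *)
Definition gop (n : nat) (i j : nat) : nat :=
  let m := hm n in
  if i < m then
    if j < m then (i + j) %% m
    else (i + j) %% m + m
  else
    if j < m then (i + (m./2 - 1) * j) %% m + m
    else ((m./2 + 1) * i + (m./2 - 1) * j) %% m.

(* a^k for k >= 1 : a^1 = a, a^(k+1) = a^k (+) a *)
Definition gpow (n : nat) (a : nat) (k : nat) : nat :=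
  iter k.-1 (fun x => gop n x a) a.

Definition vert (n : nat) := 'I_(2 ^ n).

Definition padj (n : nat) (u v : vert n) : bool :=
  (u != v) &&
  `[< (exists k, 0 < k /\ gpow n u k = v) \/ (exists k, 0 < k /\ gpow n v k = u) >].

Fixpoint ball (n : nat) (k : nat) (u : vert n) {struct k} : {set vert n} :=
  match k with
  | 0 => [set u]
  | k'.+1 => @ball n k' u :|: [set w | [exists x in @ball n k' u, padj x w]]
  end.

(* graph distance: least k with v in the ball of radius k around u
   (distances in a connected graph on 2^n vertices are < 2^n) *)
Definition dist (n : nat) (u v : vert n) : nat :=
  find (fun k => v \in @ball n k u) (iota 0 (2 ^ n)).

Definition rs (n : nat) (v : vert n) : rat :=
  (\sum_(u : vert n | u != v) ((dist u v)%:R)^-1)%R.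

(* H_rs(P(G(n)), x) as a formal generalized polynomial: coefficient of x^q
   is the number of edges uv with rs(u) + rs(v) = q. *)
Definition Hrs_coef (n : nat) (q : rat) : nat :=
  #|[set p : vert n * vert n |
      [&& (nat_of_ord p.1 < nat_of_ord p.2), padj p.1 p.2 & (rs p.1 + rs p.2 == q)%R]]|.

From HB Require Import structures.
From mathcomp Require Import all_boot all_order all_algebra.
From mathcomp Require Import zify boolp.
Set Implicit Arguments.
Unset Strict Implicit.
Unset Printing Implicit Defensive.
Import GRing.Theory.

(** On P(n) the operation is addition in Z/m, m = 2^(n-1), so the powers of
    i in P(n) are its multiples mod m; as m is a power of 2 the cyclic
    subgroups of Z/m form a chain and any two elements of P(n) are adjacent.
    An element a of H(n) satisfies a^2 = 0 and a^3 = a, so it is adjacent to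
    0 only, while 0 is adjacent to every vertex.  Hence all distances are 1
    or 2, rs(v) = (2^n - 1 + deg v)/2 takes the values 2m - 1, (3m - 2)/2 and
    m on 0, on P(n)\{0} and on H(n), and the edges split into three classes
    with constant rs-sum: m - 1 edges from 0 to P(n)\{0}, m edges from 0 to
    H(n), and C(m - 1, 2) edges inside P(n)\{0}. *)

Lemma sum_ord_range N a b : \sum_(i < N) (a <= i < b) = minn b N - minn a N.
Proof.
elim: N => [|N IH]; first by rewrite big_ord0; lia.
by rewrite big_ord_recr /= IH; case: (boolP (a <= N < b)) => /=; lia.
Qed.

Lemma sum_nat_neq (I : finType) (v : I) (P : pred I) :
  \sum_(i : I) ((i != v) && P i) = \sum_(i : I) P i - P v.
Proof.
rewrite [in RHS](bigD1 v) //= (bigD1 v) //= eqxx add0n addKn.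
by apply: eq_bigr => i ->.
Qed.

Definition is_pow n a b := exists k, 0 < k /\ gpow n a k = b.

Definition vert0 n : vert n := Ordinal (expn_gt0 2 n).

Lemma Hrs_coefE n q : Hrs_coef n q =
  \sum_(i : vert n) \sum_(j : vert n) ((i < j) && padj i j) * (rs i + rs j == q)%R.
Proof.
rewrite pair_big /Hrs_coef -sum1dep_card big_mkcond /=.
by apply: eq_bigr => -[i j] _; rewrite mulnb andbA; case: (_ && _).
Qed.

Lemma sum_vert0_pairs n (P : pred (vert n)) :
  \sum_(i : vert n) \sum_(j : vert n) ((i == 0 :> nat) && P j) = \sum_(j : vert n) P j.
Proof.
rewrite [LHS](bigD1 (vert0 n)) //= [X in _ + X]big1 ?addn0 // => i i0.
by apply: big1 => j _; rewrite (_ : (i == 0 :> nat) = false) //; apply: negbTE.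
Qed.

Definition deg n (v : vert n) : nat := \sum_(u : vert n) padj u v.

Section PowerGraph.

Variable n : nat.
Hypothesis n_gt1 : 1 < n.
Local Notation m := (hm n).

Lemma hmE : m = (2 ^ n.-2).*2.
Proof. by rewrite /hm -mul2n -expnS; congr (_ ^ _); lia. Qed.

Lemma expn_hm : 2 ^ n = m.*2.
Proof. by rewrite /hm -mul2n -expnS; congr (_ ^ _); lia. Qed.

Lemma hm_gt1 : 1 < m.
Proof. by rewrite hmE; have := expn_gt0 2 n.-2; lia. Qed.

Lemma gpowSS a k : gpow n a k.+2 = gop n (gpow n a k.+1) a.
Proof. by []. Qed.

Lemma gpow_small a k : a < m -> gpow n a k.+1 = (k.+1 * a) %% m.
Proof.
move=> am; have m_gt0 : 0 < m by apply: ltnW hm_gt1.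
elim: k => [|k IH]; first by rewrite mul1n modn_small.
by rewrite gpowSS IH /gop ltn_pmod // am modnDml mulSn addnC.
Qed.

Lemma gpow_large a k : m <= a < 2 ^ n -> gpow n a k.+1 = if odd k then 0 else a.
Proof.
rewrite expn_hm => /andP[ma a2m]; have m_gt0 : 0 < m by apply: ltnW hm_gt1.
elim: k => [|k IH] //; rewrite gpowSS IH /gop /=; case: (odd k) => /=.
- rewrite m_gt0 ltnNge ma /= add0n -(subnK ma) modnDr modn_small; lia.
- rewrite ltnNge ma /=.
  have -> : ((m./2 + 1) * a + (m./2 - 1) * a) = m * a.
    by rewrite -mulnDl hmE doubleK; congr (_ * _); have := expn_gt0 2 n.-2; lia.
  by rewrite modnMr.
Qed.

Lemma is_pow0 a : a < 2 ^ n -> is_pow n a 0.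
Proof.
move=> a2n; have m_gt1 := hm_gt1.
case: (ltnP a m) => am.
- exists m; split; first lia.
  by rewrite -(prednK (ltnW m_gt1)) gpow_small // prednK ?modnMr //; lia.
- by exists 2; rewrite gpow_large ?am.
Qed.

Lemma is_pow_dvd u v : 0 < u < m -> v < m -> gcdn u m %| v -> is_pow n u v.
Proof.
move=> /andP[u_gt0 um] vm /dvdnP[c vE].
case: (egcdnP m u_gt0) => ku km bezout _.
exists (c * ku + m); split; first by have := hm_gt1; lia.
rewrite -(prednK (_ : 0 < c * ku + m)) ?gpow_small ?prednK; try by have := hm_gt1; lia.
have -> : (c * ku + m) * u = (c * km + u) * m + v.
  by rewrite vE mulnDl -mulnA bezout gcdnC; nia.
by rewrite modnMDl modn_small.
Qed.

Lemma is_pow_small_total u v : u < m -> v < m -> is_pow n u v \/ is_pow n v u.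
Proof.
move=> um vm; have u2n : u < 2 ^ n by rewrite expn_hm; lia.
have v2n : v < 2 ^ n by rewrite expn_hm; lia.
case: (posnP u) => [-> | u_gt0]; first by right; apply: is_pow0.
case: (posnP v) => [-> | v_gt0]; first by left; apply: is_pow0.
have gcd_pow2 w : exists e, gcdn w m = 2 ^ e.
  have : gcdn w m %| 2 ^ n.-1 by apply: dvdn_gcdr.
  by case/(dvdn_pfactor _ _ (isT : prime 2)) => e _ ->; exists e.
case: (gcd_pow2 u) (gcd_pow2 v) => eu Eu [ev Ev].
case: (leqP eu ev) => le_e; [left | right]; apply: is_pow_dvd; rewrite ?u_gt0 ?v_gt0 //.
- by apply: dvdn_trans (dvdn_gcdl v m); rewrite Eu Ev dvdn_exp2l.
- by apply: dvdn_trans (dvdn_gcdl u m); rewrite Eu Ev dvdn_exp2l // ltnW.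
Qed.

Lemma is_pow_range a b : a < 2 ^ n -> is_pow n a b -> a != b ->
  (a < m) && (b < m) || (b == 0).
Proof.
move=> a2n [[|k] [//= _ <-]]; case: (ltnP a m) => am.
- by rewrite gpow_small // ltn_pmod //; lia.
- by rewrite gpow_large ?am //; case: (odd k); rewrite ?eqxx ?orbT.
Qed.

Lemma padjE (u v : vert n) :
  padj u v = (u != v) && [|| (u < m) && (v < m), u == 0 :> nat | v == 0 :> nat].
Proof.
rewrite /padj; case: eqP => //= /eqP uv; apply/asboolP/idP.
- have vu : val v != val u by rewrite eq_sym.
  case=> [/is_pow_range/(_ uv) | /is_pow_range/(_ vu)].
    by case/(_ (ltn_ord u))/orP => ->; rewrite ?orbT.
  by case/(_ (ltn_ord v))/orP => [/andP[-> ->] | ->]; rewrite ?orbT.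
- case/or3P => [/andP[um vm] | /eqP u0 | /eqP v0].
  + exact: is_pow_small_total.
  + by right; rewrite u0; apply: is_pow0.
  + by left; rewrite v0; apply: is_pow0.
Qed.

Lemma padj_vert0 (v : vert n) : v != 0 :> nat -> padj (vert0 n) v.
Proof. by move=> v0; rewrite padjE // eqxx orbT andbT; apply: contra v0 => /eqP <-. Qed.

Lemma padjC (u v : vert n) : padj u v = padj v u.
Proof. by rewrite /padj eq_sym; congr (_ && _); apply/asboolP/asboolP => -[]; by [left | right]. Qed.

Lemma in_ball1 (u v : vert n) : (v \in ball 1 u) = (v == u) || padj u v.
Proof.
rewrite /= !inE; congr orb; apply/existsP/idP => [[x /andP[]] | uv].
  by rewrite inE => /eqP ->.
by exists u; rewrite inE eqxx.
Qed.

Lemma in_ball2 (u v : vert n) : v \in ball 2 u.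
Proof.
have -> : ball 2 u = ball 1 u :|: [set w | [exists x in ball 1 u, padj x w]] by [].
rewrite in_setU in_set; have [// | v_far] := boolP (v \in ball 1 u).
move: v_far; rewrite in_ball1 negb_or padjE // => /andP[vu].
rewrite eq_sym vu /= => /norP[_ /norP[u0 v0]].
apply/existsP; exists (vert0 n).
by rewrite in_ball1 padj_vert0 // padjC padj_vert0 ?orbT.
Qed.

Lemma distE (u v : vert n) :
  dist u v = if v == u then 0 else if padj u v then 1 else 2.
Proof.
rewrite /dist; have -> : iota 0 (2 ^ n) = [:: 0, 1, 2 & iota 3 (2 ^ n - 3)].
  have -> : 2 ^ n = (2 ^ n - 3).+3 by rewrite expn_hm; have := hm_gt1; lia.
  by rewrite /= !subSS subn0.
rewrite /= in_ball1 in_ball2 inE.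
by case: (v == u); case: (padj u v).
Qed.

Lemma ordered_padjE (i j : vert n) :
  ((i < j) && padj i j : nat) =
  [&& i == 0 :> nat, 0 < j & j < m] + [&& i == 0 :> nat & m <= j]
  + [&& 0 < i, i < j & j < m].
Proof. by rewrite padjE -val_eqE /=; have := hm_gt1; lia. Qed.

Lemma rs_deg (v : vert n) : rs v = (((2 ^ n).-1 + deg v)%:R / 2%:R)%R.
Proof.
rewrite /rs (eq_bigr (fun u => ((1 + padj u v)%:R / 2%:R)%R)) => [|u uv]; last first.
  by rewrite distE // eq_sym (negbTE uv); case: (padj u v); rewrite ?invr1 ?divff ?mul1r.
rewrite -mulr_suml -natr_sum big_split /= sum1_card cardC1 card_ord.
rewrite /deg [in RHS](bigD1 v) //=.
by rewrite [padj v v]/padj eqxx.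
Qed.

Lemma degE (v : vert n) :
  deg v = if v == 0 :> nat then (2 ^ n).-1 else if v < m then m.-1 else 1.
Proof.
have m_gt1 := hm_gt1; have two_n := expn_hm.
rewrite /deg; under eq_bigr => u _ do rewrite padjE //.
rewrite sum_nat_neq; case: (posnP v) => [_ | _].
  rewrite (eq_bigr (fun u : vert n => (0 <= u < 2 ^ n) : nat)) => [|u _].
    by rewrite sum_ord_range; lia.
  by have := ltn_ord u; lia.
case: (ltnP v m) => _.
  rewrite (eq_bigr (fun u : vert n => (0 <= u < m) : nat)) => [|u _]; last lia.
  by rewrite sum_ord_range; lia.
rewrite (eq_bigr (fun u : vert n => (0 <= u < 1) : nat)) => [|u _]; last lia.
by rewrite sum_ord_range; lia.
Qed.

Lemma rsE (v : vert n) :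
  rs v = ((if v == 0 :> nat then 4 * m - 2 else if v < m then 3 * m - 2 else 2 * m)%N%:R / 2%:R)%R.
Proof.
rewrite rs_deg degE; have := hm_gt1; have := expn_hm.
by case: (v == 0 :> nat); last case: (v < m); move=> ? ?; congr (_%:R / _)%R; lia.
Qed.

Lemma count_small_pairs :
  \sum_(i : vert n) \sum_(j : vert n) [&& 0 < i, i < j & j < m] = 'C(m.-1, 2).
Proof.
have m_le : m <= 2 ^ n by rewrite expn_hm -addnn leq_addr.
rewrite exchange_big /= (eq_bigr (fun j : vert n => (j < m) * j.-1)) => [|j _]; last first.
  rewrite (eq_bigr (fun i : vert n => (j < m) * (1 <= i < j))) => [|i _]; last lia.
  by rewrite -big_distrr /= sum_ord_range; have := ltn_ord j; lia.
transitivity (\sum_(j < m) j.-1).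
  rewrite (big_ord_widen _ (fun j => j.-1) m_le) [RHS]big_mkcond /=.
  by apply: eq_bigr => j _; case: (j < m); rewrite ?mul1n.
rewrite -(big_mkord xpredT (fun j => j.-1)).
have [k ->] : exists k, m = k.+1 by exists m.-1; rewrite prednK // ltnW // hm_gt1.
by rewrite big_nat_recl //= bin2_sum.
Qed.

Lemma edge_term (i j : vert n) q :
  ((i < j) && padj i j) * (rs i + rs j == q)%R =
    [&& i == 0 :> nat, 0 < j & j < m] * (q == ((7 * m - 4)%:R / 2%:R)%R)
  + [&& i == 0 :> nat & m <= j] * (q == (3 * m - 1)%:R)%R
  + [&& 0 < i, i < j & j < m] * (q == (3 * m - 2)%:R)%R.
Proof.
have m_gt1 := hm_gt1.
rewrite eq_sym ordered_padjE !mulnDl !rsE -mulrDl -natrD; congr (_ + _ + _).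
- case: and3P => [[/eqP -> j_gt0 jm] | _]; last by rewrite !mul0n.
  rewrite (gtn_eqF j_gt0) jm /=.
  by have -> : 4 * m - 2 + (3 * m - 2) = 7 * m - 4 by lia.
- case: andP => [[/eqP -> mj] | _]; last by rewrite !mul0n.
  rewrite (gtn_eqF (leq_trans (ltnW m_gt1) mj)) [j < m]ltnNge mj /=.
  by rewrite (_ : 4 * m - 2 + 2 * m = (3 * m - 1) * 2) ?natrM ?mulfK //; lia.
- case: and3P => [[i_gt0 ij jm] | _]; last by rewrite !mul0n.
  rewrite (gtn_eqF i_gt0) (gtn_eqF (ltn_trans i_gt0 ij)) jm (ltn_trans ij jm).
  by rewrite (_ : 3 * m - 2 + (3 * m - 2) = (3 * m - 2) * 2) ?natrM ?mulfK //; lia.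
Qed.

Lemma Hrs_coef_classes q :
  Hrs_coef n q = m.-1 * (q == ((7 * m - 4)%:R / 2%:R)%R)
    + m * (q == (3 * m - 1)%:R)%R + 'C(m.-1, 2) * (q == (3 * m - 2)%:R)%R.
Proof.
have m_gt1 := hm_gt1; have two_n := expn_hm.
rewrite Hrs_coefE; under eq_bigr do under eq_bigr do rewrite edge_term.
under eq_bigr do rewrite !big_split -!big_distrl /=.
rewrite !big_split -!big_distrl /= !sum_vert0_pairs count_small_pairs sum_ord_range.
rewrite (eq_bigr (fun j : vert n => (m <= j < 2 ^ n) : nat)) => [|j _]; last by rewrite ltn_ord andbT.
by rewrite sum_ord_range; congr (_ * _ + _ * _ + _); lia.
Qed.

End PowerGraph.

Theorem mainTheorem5 (n : nat) (hn : 3 <= n) (q : rat) :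
  Hrs_coef n q =
    (2 ^ (n - 1) - 1) * (q == (((2 ^ (n + 2))%:R - (2 ^ (n - 1))%:R - 4%:R) / 2%:R)%R)
  + 2 ^ (n - 1) * (q == ((2 ^ n + 2 ^ (n - 1) - 1)%:R)%R)
  + 'C(2 ^ (n - 1) - 1, 2) * (q == ((2 ^ n + 2 ^ (n - 1) - 2)%:R)%R).
Proof.
have n_gt1 : 1 < n by apply: ltnW.
have m_gt1 := hm_gt1 n_gt1; have two_n := expn_hm n_gt1.
have -> : 2 ^ (n - 1) = hm n by rewrite subn1.
have -> : ((2 ^ (n + 2))%:R - (hm n)%:R - 4%:R = (7 * hm n - 4)%:R :> rat)%R.
  by rewrite expnD two_n -!natrB; [congr (_%:R)%R | ..]; lia.
rewrite Hrs_coef_classes // two_n.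
by congr (_ * _ + _ * (q == (_%:R)%R) + 'C(_, 2) * (q == (_%:R)%R)); lia.
Qed.
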